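(* Let $G$ be a directed graph with positive integer edge weights, let $0<\epsilon\le 1$, let $x,y$ be nodes, let $h\ge 1$, $r\ge 0$, $\alpha\ge 1$, and let $\mathcal Q\subseteq V$ be a set of nodes such that $\mathcal P^h(x,y,\alpha(1+\epsilon)^r,G)\subseteq\mathcal Q$. Then $\mathcal P^h(x,y,\alpha(1+\epsilon)^r,G)\subseteq\mathcal P(x,y,\alpha(1+\epsilon)^{r+1},\tilde G^{h,r}[\mathcal Q])$.
   Context: For a weighted directed graph $H$, nodes $x,y$ and $D\ge 1$: the path union $\mathcal P(x,y,D,H)$ is the set of nodes lying on some path from $x$ to $y$ in $H$ of weight at most $D$; for an integer $h\ge 1$ the $h$-hop path union $\mathcal P^h(x,y,D,H)$ is the set of nodes lying on some path from $x$ to $y$ in $H$ with at most $h$ edges and weight at most $D$. For $h\ge 1$ and $r\ge 0$, $\tilde G^{h,r}$ has the same nodes and edges as $G$, with each edge weight rounded up to the next multiple of $\epsilon(1+\epsilon)^r/h$: $w_{\tilde G^{h,r}}(u,v)=\lceil w_G(u,v)\,h/(\epsilon(1+\epsilon)^r)\rceil\cdot\epsilon(1+\epsilon)^r/h$. $\tilde G^{h,r}[\mathcal Q]$ is the subgraph of $\tilde G^{h,r}$ induced by $\mathcal Q$. *)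

From mathcomp Require Import all_boot all_order all_algebra.
From mathcomp Require Import reals.
Set Implicit Arguments. Unset Strict Implicit. Unset Printing Implicit Defensive.
Import Order.TTheory GRing.Theory Num.Theory.
Local Open Scope ring_scope.

Record wdigraph (V : finType) (R : realType) := WDigraph {
  wnodes : {set V};
  wedge  : rel V;
  wweight : V -> V -> R
}.

Section Paths.
Variables (V : finType) (R : realType) (H : wdigraph V R).

(* x :: p is a path (walk) in H from x to y *)
Definition is_path (x : V) (p : seq V) (y : V) : bool :=
  [&& path (wedge H) x p, last x p == y & all (fun v => v \in wnodes H) (x :: p)].

Definition path_weight (x : V) (p : seq V) : R :=
  \sum_(e <- zip (x :: p) p) wweight H e.1 e.2.

Definition path_hops (p : seq V) : nat := size p.

Definition path_union (x y : V) (D : R) : V -> Prop :=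
  fun v => exists p : seq V,
    [/\ is_path x p y, path_weight x p <= D & v \in x :: p].

Definition hop_path_union (h : nat) (x y : V) (D : R) : V -> Prop :=
  fun v => exists p : seq V,
    [/\ is_path x p y, (path_hops p <= h)%N, path_weight x p <= D & v \in x :: p].
End Paths.

Definition graph_of (V : finType) (R : realType) (E : rel V) (wG : V -> V -> nat)
  : wdigraph V R := WDigraph [set: V] E (fun u v => (wG u v)%:R).

Definition round_weight (R : realType) (eps : R) (h r : nat) (w : R) : R :=
  let u := eps * (1 + eps) ^+ r / h%:R in
  (Num.ceil (w / u))%:~R * u.

Definition rounded_graph (V : finType) (R : realType) (E : rel V)
  (wG : V -> V -> nat) (eps : R) (h r : nat) : wdigraph V R :=
  WDigraph [set: V] E (fun u v => round_weight eps h r (wG u v)%:R).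

Definition induced (V : finType) (R : realType) (H : wdigraph V R) (Q : {set V})
  : wdigraph V R :=
  WDigraph (wnodes H :&: Q) (fun u v => [&& wedge H u v, u \in Q & v \in Q])
           (wweight H).

From mathcomp Require Import all_boot all_order all_algebra.
From mathcomp Require Import reals.
Set Implicit Arguments. Unset Strict Implicit. Unset Printing Implicit Defensive.
Import Order.TTheory GRing.Theory Num.Theory.
Local Open Scope ring_scope.

(* Rounding up to a multiple of u = eps (1+eps)^r / h adds less than u to each
   edge, so a path with at most h edges gains at most h u = eps (1+eps)^r in
   weight; since alpha >= 1 this fits into alpha (1+eps)^(r+1) - alpha (1+eps)^r.
   Every node of such a path lies in Q, so the path survives in the induced
   subgraph. *)

Lemma ceil_mul_le (R : realType) (u w : R) :
  0 < u -> (Num.ceil (w / u))%:~R * u <= w + u.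
Proof.
move=> u_gt0.
have ceil_le : (Num.ceil (w / u))%:~R <= w / u + 1.
  by rewrite -lerBlDr ltW // -[1]/(1%:~R : R) -rmorphB ceilB1_lt.
by apply: le_trans (ler_wpM2r (ltW u_gt0) ceil_le) _; rewrite mulrDl divfK ?gt_eqF ?mul1r.
Qed.

Lemma round_weight_le (R : realType) (eps : R) (h r : nat) (w : R) :
  0 < eps -> (0 < h)%N ->
  round_weight eps h r w <= w + eps * (1 + eps) ^+ r / h%:R.
Proof.
move=> eps_gt0 h_gt0; apply: ceil_mul_le.
by rewrite divr_gt0 ?ltr0n // mulr_gt0 // exprn_gt0 // ltr_wpDr // ltW.
Qed.

Lemma path_weight_le_shift (V : finType) (R : realType) (H1 H2 : wdigraph V R)
    (c : R) :
  (forall u v, wweight H1 u v <= wweight H2 u v + c) ->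
  forall x p, path_weight H1 x p <= path_weight H2 x p + (size p)%:R * c.
Proof.
move=> le_w x p; elim: p x => [|a p IHp] x.
  by rewrite /path_weight !big_nil mul0r addr0.
rewrite /path_weight /= !big_cons -add1n natrD mulrDl mul1r addrACA.
exact: lerD (le_w x a) (IHp a).
Qed.

Lemma is_path_induced (V : finType) (R : realType) (H : wdigraph V R)
    (Q : {set V}) x p y :
  is_path H x p y -> {subset x :: p <= Q} -> is_path (induced H Q) x p y.
Proof.
case/and3P=> pathHp last_p /allP inH inQ; apply/and3P; split=> //.
  apply: (sub_in_path (P := mem (x :: p))) pathHp; last exact/allP.
  by move=> a b a_p b_p /= ->; rewrite !inQ.
by apply/allP=> w w_p; rewrite inE inH ?inQ.
Qed.

Lemma hop_slack_le (R : realType) (n h : nat) (d : R) :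
  0 <= d -> (0 < h)%N -> (n <= h)%N -> n%:R * (d / h%:R) <= d.
Proof.
move=> d_ge0 h_gt0 n_le_h; rewrite mulrCA; apply: ler_piMr d_ge0 _.
by rewrite ler_pdivrMr ?ltr0n // mul1r ler_nat.
Qed.

Theorem lemma6p3 (R : realType) (V : finType) (E : rel V) (wG : V -> V -> nat)
  (hw : forall u v, E u v -> (0 < wG u v)%N)
  (eps : R) (heps0 : 0 < eps) (heps1 : eps <= 1)
  (x y : V) (h r : nat) (hh : (1 <= h)%N) (alpha : R) (halpha : 1 <= alpha)
  (Q : {set V})
  (hQ : forall v, hop_path_union (graph_of R E wG) h x y (alpha * (1 + eps) ^+ r) v
                  -> v \in Q) :
  forall v, hop_path_union (graph_of R E wG) h x y (alpha * (1 + eps) ^+ r) v ->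
    path_union (induced (rounded_graph E wG eps h r) Q) x y
               (alpha * (1 + eps) ^+ r.+1) v.
Proof.
move=> v [p [path_p hops_p weight_p v_p]].
have p_in_Q : {subset x :: p <= Q} by move=> w w_p; apply: hQ; exists p.
(* G~^{h,r} shares the nodes and edges of G, so [is_path] agrees by conversion. *)
exists p; split=> //; first exact: is_path_induced.
have rounding_le := path_weight_le_shift (H1 := induced (rounded_graph E wG eps h r) Q)
  (H2 := graph_of R E wG) (fun u w => round_weight_le r _ heps0 hh) x p.
apply: le_trans rounding_le _.
set c := (1 + eps) ^+ r.
have eps_c_ge0 : 0 <= eps * c by rewrite mulr_ge0 ?exprn_ge0 ?addr_ge0 ?ltW.
have slack_le : (size p)%:R * (eps * c / h%:R) <= alpha * (eps * c).
  by apply: le_trans (hop_slack_le eps_c_ge0 hh hops_p) _; rewrite ler_peMl.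
by rewrite exprSr -/c mulrDr mulr1 mulrDr (mulrC c eps) lerD.
Qed.
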